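(* Let $R$ be a commutative Noetherian ring of prime characteristic $p$ and let $H$ be a left $R[x,f]$-module admitting an HSL-number $m_0$, such that the $x$-torsion-free module $G:=H/\Gamma_x(H)$ has only finitely many $G$-special $R$-ideals. Let $\mathfrak{b}$ be the unique member of $\mathcal{I}(G)$ of height $\ge1$ that is contained in every member of $\mathcal{I}(G)$ of height $\ge1$. For $h\in H$ the following are equivalent: (i) $h$ is annihilated by $\bigoplus_{n\ge m_0}\mathfrak{b}^{[p^{m_0}]}x^n$; (ii) there exists $c\in R^\circ\cap\mathfrak{b}$ with $cx^nh=0$ for all $n\ge m_0$; (iii) there exists $c\in R^\circ\cap\mathfrak{b}$ with $cx^nh=0$ for all $n\gg0$; (iv) there exists $c\in R^\circ$ with $cx^nh=0$ for all $n\gg0$.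
   Context: $R[x,f]$ is the Frobenius skew polynomial ring: free left $R$-module on $(x^i)_{i\ge0}$, with $xr=r^px$. $\Gamma_x(H)=\{h\in H: x^jh=0\text{ for some }j\in\mathbb{N}\}$, an $R[x,f]$-submodule; $H/\Gamma_x(H)$ is $x$-torsion-free ($xg=0\Rightarrow g=0$). $H$ admits an HSL-number if there is $e\in\mathbb{N}_0$ with $x^e\Gamma_x(H)=0$; the smallest such $e$ is the HSL-number. The graded annihilator $\operatorname{grann}N$ is the set of $\sum r_ix^i$ with each $r_ix^i$ annihilating $N$. An ideal $\mathfrak{b}$ of $R$ is $G$-special if $\operatorname{grann}N=\bigoplus_{n\ge0}\mathfrak{b}x^n$ for some $R[x,f]$-submodule $N$ of $G$; $\mathcal{I}(G)$ is the set of these; $R$ has infinite height. $\mathfrak{b}^{[q]}$ is the ideal generated by $q$-th powers of elements of $\mathfrak{b}$; $R^\circ$ is the complement of the union of minimal primes. *)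

From mathcomp Require Import all_boot ssralg.
Set Implicit Arguments. Unset Strict Implicit. Unset Printing Implicit Defensive.
Import GRing.Theory.
Local Open Scope ring_scope.

Section Ideals.
Variable R : comNzRingType.

Definition is_ideal (I : R -> Prop) : Prop :=
  [/\ I 0, (forall a b, I a -> I b -> I (a + b)) & (forall r a, I a -> I (r * a))].

Definition is_prime (P : R -> Prop) : Prop :=
  [/\ is_ideal P, ~ P 1 & (forall a b, P (a * b) -> P a \/ P b)].

Definition noetherian : Prop :=
  forall I : nat -> (R -> Prop), (forall n, is_ideal (I n)) ->
    (forall n r, I n r -> I n.+1 r) ->
    exists N, forall n r, (N <= n)%N -> I n r -> I N r.

Definition sincl (P Q : R -> Prop) : Prop :=
  (forall r, P r -> Q r) /\ exists r, Q r /\ ~ P r.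

(* ht(I) >= n : every prime P containing I has height >= n, i.e. admits a
   chain of primes P_0 ⊊ P_1 ⊊ ... ⊊ P_n = P.  (The unit ideal, contained in
   no prime, has infinite height, as in the paper's convention.) *)
Definition height_ge (I : R -> Prop) (n : nat) : Prop :=
  forall P, is_prime P -> (forall r, I r -> P r) ->
    exists c : nat -> (R -> Prop),
      [/\ (forall i, (i <= n)%N -> is_prime (c i)),
          (forall i, (i < n)%N -> sincl (c i) (c i.+1)) &
          (forall r, c n r <-> P r)].

Definition minimal_prime (P : R -> Prop) : Prop :=
  is_prime P /\ forall Q, is_prime Q -> ~ sincl Q P.

Definition Rcirc (c : R) : Prop := forall P, minimal_prime P -> ~ P c.

Definition frob_bracket (b : R -> Prop) (q : nat) (r : R) : Prop :=
  exists k (a s : 'I_k -> R), (forall i, b (s i)) /\ r = \sum_(i < k) a i * s i ^+ q.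

End Ideals.

(* Left R[x,f]-modules: an R-module M together with an additive map
   x : M -> M with x (r m) = r^p x m (the action of x in R[x,f]).
   The element r x^n acts as m |-> r *: iter n x m. *)
Section FrobModules.
Variables (R : comNzRingType) (p : nat).

Definition frob_action (M : lmodType R) (x : M -> M) : Prop :=
  (forall a b, x (a + b) = x a + x b) /\ (forall (r : R) a, x (r *: a) = r ^+ p *: x a).

Definition Gamma_x (M : lmodType R) (x : M -> M) (m : M) : Prop :=
  exists j, iter j x m = 0.

Definition HSL_number (M : lmodType R) (x : M -> M) (m0 : nat) : Prop :=
  (forall m, Gamma_x x m -> iter m0 x m = 0) /\
  (forall e, (forall m, Gamma_x x m -> iter e x m = 0) -> (m0 <= e)%N).

Definition Rxf_submodule (M : lmodType R) (x : M -> M) (N : M -> Prop) : Prop :=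
  [/\ N 0, (forall a b, N a -> N b -> N (a + b)),
      (forall (r : R) a, N a -> N (r *: a)) & (forall a, N a -> N (x a))].

(* The degree-n component of the graded annihilator of N:
   those r with r x^n annihilating N. *)
Definition grann_comp (M : lmodType R) (x : M -> M) (N : M -> Prop) (n : nat) (r : R) : Prop :=
  forall g, N g -> r *: iter n x g = 0.

(* b is M-special: grann N = (+)_{n>=0} b x^n for some R[x,f]-submodule N. *)
Definition special_ideal (M : lmodType R) (x : M -> M) (b : R -> Prop) : Prop :=
  is_ideal b /\ exists N, Rxf_submodule x N /\
    forall n r, grann_comp x N n r <-> b r.

(* I(M) has only finitely many members (up to extensional equality). *)
Definition finitely_many_special (M : lmodType R) (x : M -> M) : Prop :=
  exists (k : nat) (s : nat -> (R -> Prop)),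
    forall b, special_ideal x b -> exists2 i, (i < k)%N & forall r, b r <-> s i r.

End FrobModules.

From mathcomp Require Import all_boot ssralg.
From Stdlib Require Import Classical ClassicalEpsilon.
Set Implicit Arguments. Unset Strict Implicit. Unset Printing Implicit Defensive.
Import GRing.Theory.
Local Open Scope ring_scope.

(* Write g for the image of h in G = H/Gamma_x(H).  If c in R° kills x^n h for
   n >> 0 then, G being x-torsion-free, c kills x^n g for every n.  The elements
   of G killed by every c x^n form an R[x,f]-submodule whose graded annihilator
   is (+)_n b' x^n, where b' is its R-annihilator; as c lies in b', this b' is
   G-special of positive height, so b is contained in b'.  Hence b x^n h lies in
   Gamma_x(H), and the HSL-number gives b^[p^m0] x^(m0+n) h = 0.  Conversely, a
   Noetherian ring has finitely many minimal primes and b, of positive height,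
   lies in none of them, so prime avoidance provides an element of b ∩ R°. *)

Local Notation "I \subseteq J" := (forall r, I r -> J r) (at level 70).

Lemma additive_map0 (U V : zmodType) (f : U -> V) :
  (forall a b, f (a + b) = f a + f b) -> f 0 = 0.
Proof. by move=> fD; apply: (addrI (f 0)); rewrite -fD !addr0. Qed.

Lemma finite_select (S : nat -> Prop) m : exists m' (f : nat -> nat),
  (forall j, (j < m')%N -> S (f j)) /\
  forall i, (i < m)%N -> S i -> exists2 j, (j < m')%N & f j = i.
Proof.
elim: m => [|m [m' [f [fS f_onto]]]]; first by exists 0%N, id.
have [Sm | nSm] := classic (S m); last first.
  exists m', f; split=> // i; rewrite ltnS leq_eqVlt => /orP[/eqP -> //|].
  exact: f_onto.
exists m'.+1, (fun j => if j == m' then m else f j); split.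
  by move=> j; rewrite ltnS leq_eqVlt => /orP[/eqP ->|/[dup] jm /ltn_eqF ->];
    rewrite ?eqxx //; apply: fS.
move=> i; rewrite ltnS leq_eqVlt => /orP[/eqP -> _|im Si]; first by exists m'; rewrite ?eqxx.
by have [j jm <-] := f_onto i im Si; exists j; rewrite ?ltn_eqF // ltnW.
Qed.

Lemma not_subset_witness (T : Type) (A B : T -> Prop) :
  ~ A \subseteq B -> exists2 r, A r & ~ B r.
Proof.
move=> nAB; apply: NNPP => no_witness; apply: nAB => r Ar.
by apply: NNPP => nBr; apply: no_witness; exists r.
Qed.

Section IdealTheory.
Variable R : comNzRingType.
Implicit Types (I J P Q : R -> Prop) (a c r : R).

Lemma ideal0 : is_ideal (fun r : R => r = 0).
Proof. by split=> [//|a c -> ->|r a ->]; rewrite ?addr0 ?mulr0. Qed.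

Lemma prime_ideal P : is_prime P -> is_ideal P.
Proof. by case. Qed.

Lemma ideal_addKr I a c : is_ideal I -> I (a + c) -> I c -> I a.
Proof.
case=> _ ID IM Iac Ic; rewrite -[a](addrK c) -mulN1r.
by apply: ID => //; apply: IM.
Qed.

Lemma ideal_expr I c k : is_ideal I -> (0 < k)%N -> I c -> I (c ^+ k).
Proof. by case=> _ _ IM k_gt0 Ic; rewrite -(prednK k_gt0) exprSr; apply: IM. Qed.

Lemma prime_expr P c k : is_prime P -> P (c ^+ k) -> P c.
Proof.
case=> _ nP1 Pmul; elim: k => [|k IHk]; first by rewrite expr0.
by rewrite exprS => /Pmul[|/IHk].
Qed.

Definition ideal_adjoin I a r : Prop := exists i s, I i /\ r = i + s * a.

Lemma ideal_adjoin_ideal I a : is_ideal I -> is_ideal (ideal_adjoin I a).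
Proof.
case=> I0 ID IM; split.
- by exists 0, 0; rewrite mul0r addr0.
- move=> _ _ [i1 [s1 [Ii1 ->]]] [i2 [s2 [Ii2 ->]]].
  by exists (i1 + i2), (s1 + s2); rewrite mulrDl addrACA; split=> //; apply: ID.
- move=> r _ [i [s [Ii ->]]].
  by exists (r * i), (r * s); rewrite mulrDr mulrA; split=> //; apply: IM.
Qed.

Lemma ideal_adjoin_min I a P : is_ideal P -> I \subseteq P -> P a ->
  ideal_adjoin I a \subseteq P.
Proof. by case=> _ PD PM IP Pa _ [i [s [Ii ->]]]; apply: PD; [apply: IP | apply: PM]. Qed.

Lemma sincl_ideal_adjoin I a : is_ideal I -> ~ I a -> sincl I (ideal_adjoin I a).
Proof.
move=> [I0 _ _] nIa; split; first by move=> r Ir; exists r, 0; rewrite mul0r addr0.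
by exists a; split=> //; exists 0, 1; rewrite mul1r add0r.
Qed.

Definition finite_prime_cover I : Prop := exists m (Q : nat -> R -> Prop),
  (forall i, (i < m)%N -> is_prime (Q i)) /\
  forall P, is_prime P -> I \subseteq P -> exists2 i, (i < m)%N & Q i \subseteq P.

Lemma finite_prime_cover_adjoin I a c : I (a * c) ->
  finite_prime_cover (ideal_adjoin I a) -> finite_prime_cover (ideal_adjoin I c) ->
  finite_prime_cover I.
Proof.
move=> Iac [m1 [Q1 [Q1prime Q1cover]]] [m2 [Q2 [Q2prime Q2cover]]].
exists (m1 + m2)%N, (fun i => if (i < m1)%N then Q1 i else Q2 (i - m1)%N); split.
  move=> i im; case: ifP => [/Q1prime //|/negbT]; rewrite -leqNgt => m1i.
  by apply: Q2prime; rewrite ltn_subLR.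
move=> P Pprime IP; have [Pid _ Pmul] := Pprime.
have [Pa | Pc] := Pmul a c (IP _ Iac).
  have [i im Q1P] := Q1cover P Pprime (ideal_adjoin_min Pid IP Pa).
  by exists i; rewrite ?im // ltn_addr.
have [i im Q2P] := Q2cover P Pprime (ideal_adjoin_min Pid IP Pc).
by exists (m1 + i)%N; rewrite ?ltn_add2l // ltnNge leq_addr addKn.
Qed.

Lemma finite_prime_cover_step I : is_ideal I -> ~ finite_prime_cover I ->
  exists J, [/\ is_ideal J, ~ finite_prime_cover J & sincl I J].
Proof.
move=> Iid Inc.
have Iprime : ~ is_prime I.
  by move=> Ip; apply: Inc; exists 1%N, (fun=> I); split=> // P _ IP; exists 0%N.
have nI1 : ~ I 1.
  by move=> I1; apply: Inc; exists 0%N, (fun=> I); split=> // P [_ nP1 _] /(_ 1 I1).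
have [a [c not_mul]] : exists a c, ~ (I (a * c) -> I a \/ I c).
  apply: NNPP => Imul; apply: Iprime; split=> // a c.
  by apply: NNPP => ?; apply: Imul; exists a, c.
have [Iac /not_or_and[nIa nIc]] := imply_to_and _ _ not_mul.
have adjoin_bad d : ~ I d -> ~ finite_prime_cover (ideal_adjoin I d) ->
    exists J, [/\ is_ideal J, ~ finite_prime_cover J & sincl I J].
  move=> nId ?; exists (ideal_adjoin I d).
  by split; [apply: ideal_adjoin_ideal | | apply: sincl_ideal_adjoin].
have [?|] := classic (finite_prime_cover (ideal_adjoin I a)); last exact: adjoin_bad.
have [?|] := classic (finite_prime_cover (ideal_adjoin I c)); last exact: adjoin_bad.
by case: Inc; apply: finite_prime_cover_adjoin Iac _ _.
Qed.

Lemma noetherian_ind (Pr : (R -> Prop) -> Prop) : noetherian R ->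
  (forall I, is_ideal I -> ~ Pr I -> exists J, [/\ is_ideal J, ~ Pr J & sincl I J]) ->
  forall I, is_ideal I -> Pr I.
Proof.
move=> noeth step I Iid; apply: NNPP => nPrI.
pose B := {J | is_ideal J /\ ~ Pr J}.
have next (J : B) : {K : B | sincl (sval J) (sval K)}.
  case: J => J [Jid nPrJ]; have := step J Jid nPrJ.
  case/constructive_indefinite_description => K [Kid nPrK JK].
  by exists (exist _ K (conj Kid nPrK)).
pose chain n := iter n (fun J : B => sval (next J)) (exist _ I (conj Iid nPrI) : B).
have chain_sincl n : sincl (sval (chain n)) (sval (chain n.+1)) := svalP (next _).
have [N stable] := noeth (fun n => sval (chain n)) (fun n => (svalP (chain n)).1)
  (fun n => (chain_sincl n).1).
by have [_ [r [Nr []]]] := chain_sincl N; apply: stable Nr.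
Qed.

Lemma noetherian_finite_prime_cover I : noetherian R -> is_ideal I -> finite_prime_cover I.
Proof. by move=> noeth; apply: noetherian_ind => //; apply: finite_prime_cover_step. Qed.

Lemma minimal_prime_sub P Q :
  minimal_prime P -> is_prime Q -> Q \subseteq P -> P \subseteq Q.
Proof.
case=> _ Pmin Qp QP r Pr; apply: NNPP => nQr.
by apply: (Pmin Q Qp); split=> //; exists r.
Qed.

Lemma noetherian_finite_minimal_primes : noetherian R ->
  exists m (Q : nat -> R -> Prop), (forall i, (i < m)%N -> minimal_prime (Q i)) /\
    forall P, minimal_prime P -> exists2 i, (i < m)%N & forall r, P r <-> Q i r.
Proof.
move=> noeth; have [m [Q [Qprime Qcover]]] := noetherian_finite_prime_cover noeth ideal0.
have [m' [f [fmin f_onto]]] := finite_select (fun i => minimal_prime (Q i)) m.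
exists m', (fun j => Q (f j)); split=> // P Pmin.
have [Pprime _] := Pmin; have [Pid _ _] := Pprime.
have [i im QP] : exists2 i, (i < m)%N & Q i \subseteq P.
  by apply: Qcover => // _ ->; case: Pid.
have PQ := minimal_prime_sub Pmin (Qprime i im) QP.
have Qmin : minimal_prime (Q i).
  split=> [|Q' Q'p [Q'Q [r [Qr nQ'r]]]]; first exact: Qprime.
  have [_ /(_ Q' Q'p)] := Pmin; apply; split=> [s /Q'Q /QP //|].
  by exists r; split=> //; apply: QP.
have [j jm fj] := f_onto i im Qmin.
by exists j; rewrite // fj; split; [apply: PQ | apply: QP].
Qed.

Lemma prime_avoid_prod P m (Q : nat -> R -> Prop) : is_prime P ->
  (forall i, (i < m)%N -> is_ideal (Q i)) -> (forall i, (i < m)%N -> ~ Q i \subseteq P) ->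
  exists t, ~ P t /\ forall i, (i < m)%N -> Q i t.
Proof.
case=> _ nP1 Pmul; elim: m => [|m IHm] Qid QnP; first by exists 1.
have [|t [nPt Qt]] := IHm (fun i im => Qid i (ltnW im)).
  by move=> i im; apply: QnP; rewrite ltnW.
have [u Qu nPu] := not_subset_witness (QnP m (ltnSn m)).
exists (t * u); split; first by case/Pmul.
move=> i; rewrite ltnS leq_eqVlt => /orP[/eqP ->|im].
  by have [_ _ QM] := Qid m (ltnSn m); apply: QM.
by have [_ _ QM] := Qid i (ltnW im); rewrite mulrC; apply: QM; apply: Qt.
Qed.

Lemma prime_avoidance I m (Q : nat -> R -> Prop) : is_ideal I ->
  (forall i, (i < m)%N -> is_prime (Q i)) ->
  (forall i j, (i < m)%N -> (j < m)%N -> Q i \subseteq Q j -> Q j \subseteq Q i) ->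
  (forall i, (i < m)%N -> ~ I \subseteq Q i) ->
  exists2 y, I y & forall i, (i < m)%N -> ~ Q i y.
Proof.
move=> Iid; have [I0 ID IM] := Iid.
elim: m => [|m IHm] Qprime Qincomp InQ; first by exists 0.
have [||| a Ia nQa] := IHm.
- by move=> i im; apply: Qprime; rewrite ltnW.
- by move=> i j im jm; apply: Qincomp; rewrite ltnW.
- by move=> i im; apply: InQ; rewrite ltnW.
have [Qm_id _ Qm_mul] := Qprime m (ltnSn m).
have [Qma | nQma] := classic (Q m a); last first.
  by exists a => // i; rewrite ltnS leq_eqVlt => /orP[/eqP ->|/nQa].
(* The witness is a + s t with s in I but not in Q m, and t in every Q i,
   i < m, but not in Q m. *)
have QnQm j : (j < m)%N -> ~ Q j \subseteq Q m.
  by move=> jm /(Qincomp j m (ltnW jm) (ltnSn m))/(_ a Qma); apply: nQa.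
have [|t [nQmt Qt]] := prime_avoid_prod (Qprime m (ltnSn m)) _ QnQm.
  by move=> i im; apply: prime_ideal (Qprime i (ltnW im)).
have [s Is nQms] := not_subset_witness (InQ m (ltnSn m)).
exists (a + s * t); first by apply: ID => //; rewrite mulrC; apply: IM.
move=> i; rewrite ltnS leq_eqVlt => /orP[/eqP ->|im] Qy.
  by have /Qm_mul[] : Q m (s * t) by apply: ideal_addKr Qm_id _ Qma; rewrite addrC.
have [Qi_id _ _] := Qprime i (ltnW im); have [_ _ QiM] := Qi_id.
by apply: (nQa i im); apply: ideal_addKr Qi_id Qy _; apply: QiM; apply: Qt.
Qed.

Lemma height_ge1_not_sub_minimal I P : height_ge I 1 -> minimal_prime P -> ~ I \subseteq P.
Proof.
move=> Iht [Pprime Pmin] IP; have [c [cprime csincl cP]] := Iht P Pprime IP.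
apply: (Pmin (c 0%N) (cprime 0%N isT)); have [c01 [r [c1r nc0r]]] := csincl 0%N isT.
by split=> [s /c01 /cP //|]; exists r; split=> //; apply/cP.
Qed.

Lemma height_ge1_Rcirc I : noetherian R -> is_ideal I -> height_ge I 1 ->
  exists2 c, Rcirc c & I c.
Proof.
move=> noeth Iid Iht; have [m [Q [Qmin Qall]]] := noetherian_finite_minimal_primes noeth.
have [||| y Iy nQy] := @prime_avoidance I m Q Iid.
- by move=> i /Qmin[].
- by move=> i j /Qmin Qi /Qmin Qj; apply: minimal_prime_sub Qj Qi.1.
- by move=> i /Qmin; apply: height_ge1_not_sub_minimal.
by exists y => // P /Qall[i im PQ] /PQ; apply: nQy.
Qed.

Lemma Rcirc_height_ge1 I c : I c -> Rcirc c -> height_ge I 1.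
Proof.
move=> Ic Rc P Pprime IP.
have [Q Qprime QP] : exists2 Q, is_prime Q & sincl Q P.
  apply: NNPP => noQ; apply: (Rc P) (IP c Ic); split=> // Q Qp QP.
  by apply: noQ; exists Q.
by exists (fun i => if i == 0%N then Q else P); split=> [[|i]|[|i]|].
Qed.

Lemma Rcirc_expr c k : Rcirc c -> Rcirc (c ^+ k).
Proof. by move=> Rc P Pmin /(prime_expr Pmin.1); apply: Rc. Qed.

End IdealTheory.

Lemma scale_expr_eq0 (R : comNzRingType) (M : lmodType R) (r : R) k (v : M) :
  (0 < k)%N -> r *: v = 0 -> r ^+ k *: v = 0.
Proof. by move=> k_gt0 rv; rewrite -(prednK k_gt0) exprSr -scalerA rv scaler0. Qed.

Section FrobeniusModules.
Variables (R : comNzRingType) (p : nat) (M : lmodType R) (x : M -> M).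
Hypothesis x_frob : frob_action p x.

Lemma iter_frob0 n : iter n x 0 = 0.
Proof. by have x0 := additive_map0 x_frob.1; elim: n => //= n ->. Qed.

Lemma iter_frobD n a c : iter n x (a + c) = iter n x a + iter n x c.
Proof. by elim: n => //= n ->; rewrite x_frob.1. Qed.

Lemma iter_frobZ n (r : R) a : iter n x (r *: a) = r ^+ (p ^ n) *: iter n x a.
Proof.
elim: n => [|n IHn] /=; first by rewrite expn0 expr1.
by rewrite IHn x_frob.2 -exprM expnSr.
Qed.

Definition ann_cx (c : R) (y : M) : Prop := forall n, c *: iter n x y = 0.

Definition annR (N : M -> Prop) (r : R) : Prop := forall y, N y -> r *: y = 0.

Lemma ann_cx_iter c n y : ann_cx c y -> ann_cx c (iter n x y).
Proof. by move=> cy k; rewrite -iterD. Qed.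

Lemma Rxf_submodule_ann_cx c : Rxf_submodule x (ann_cx c).
Proof.
split.
- by move=> n; rewrite iter_frob0 scaler0.
- by move=> a a' ca ca' n; rewrite iter_frobD scalerDr ca ca' addr0.
- by move=> r a ca n; rewrite iter_frobZ scalerA mulrC -scalerA ca scaler0.
- exact: (ann_cx_iter 1).
Qed.

Section TorsionFree.
Hypotheses (p_gt0 : (0 < p)%N) (x_tf : forall y, x y = 0 -> y = 0).

Lemma iter_torsion_free n y : iter n x y = 0 -> y = 0.
Proof. by elim: n y => // n IHn y; rewrite iterSr => /IHn /x_tf. Qed.

Lemma scale_iter_torsion_free r n y : r *: iter n x y = 0 -> r *: y = 0.
Proof.
move=> ry; apply: (iter_torsion_free (n := n)).
by rewrite iter_frobZ scale_expr_eq0 // expn_gt0 p_gt0.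
Qed.

Lemma torsion_free_special N : Rxf_submodule x N -> special_ideal x (annR N).
Proof.
move=> Nsub; have [_ _ _ Nx] := Nsub; split.
  split=> [y _|r r' rN r'N y Ny|r r' r'N y Ny].
  - by rewrite scale0r.
  - by rewrite scalerDl rN ?r'N ?addr0.
  - by rewrite -scalerA r'N ?scaler0.
exists N; split=> // n r; split=> [rN y Ny|rN y Ny].
  by apply: (scale_iter_torsion_free (n := n)); apply: rN.
by apply: rN; elim: n => //= n; apply: Nx.
Qed.

Lemma ann_cx_eventually c N y :
  (forall n, (N <= n)%N -> c *: iter n x y = 0) -> ann_cx c y.
Proof.
by move=> cy n; apply: (scale_iter_torsion_free (n := N)); rewrite -iterD cy ?leq_addr.
Qed.

Lemma special_min_ann_cx (b : R -> Prop) c y :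
  (forall b', special_ideal x b' -> height_ge b' 1 -> b \subseteq b') ->
  Rcirc c -> ann_cx c y -> forall r n, b r -> r *: iter n x y = 0.
Proof.
move=> b_min Rc cy r n br.
have cN : annR (ann_cx c) c by move=> z /(_ 0%N).
have b'_special := torsion_free_special (Rxf_submodule_ann_cx c).
by apply: (b_min _ b'_special (Rcirc_height_ge1 cN Rc)) => //; apply: ann_cx_iter.
Qed.

End TorsionFree.
End FrobeniusModules.

Lemma frob_bracket_scale_eq0 (R : comNzRingType) (M : lmodType R) (b : R -> Prop) q
    (v : M) : (forall s, b s -> s ^+ q *: v = 0) ->
  forall r, frob_bracket b q r -> r *: v = 0.
Proof.
move=> bv _ [k [a [s [bs ->]]]]; rewrite scaler_suml big1 // => i _.
by rewrite -scalerA bv ?scaler0.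
Qed.

Lemma frob_bracket_expr (R : comNzRingType) (b : R -> Prop) q c :
  b c -> frob_bracket b q (c ^+ q).
Proof. by exists 1%N, (fun=> 1), (fun=> c); rewrite big_ord1 mul1r. Qed.

Section GammaQuotient.
Variables (R : comNzRingType) (H G : lmodType R) (xH : H -> H) (xG : G -> G) (pi : H -> G).
Hypotheses (pi_x : forall a, pi (xH a) = xG (pi a))
  (pi_surj : forall g, exists h, pi h = g)
  (pi_ker : forall h, pi h = 0 <-> Gamma_x xH h).

Lemma pi_iter n a : pi (iter n xH a) = iter n xG (pi a).
Proof. by elim: n => //= n <-; rewrite pi_x. Qed.

Lemma Gamma_quotient_torsion_free y : xG y = 0 -> y = 0.
Proof.
have [a <-] := pi_surj y; rewrite -pi_x => /pi_ker[j xa0].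
by apply/pi_ker; exists j.+1; rewrite iterSr.
Qed.

End GammaQuotient.

Theorem corollary3p16
  (R : comNzRingType) (p : nat) (charRp : p \in [pchar R]) (noethR : noetherian R)
  (H : lmodType R) (xH : H -> H) (xH_act : frob_action p xH)
  (m0 : nat) (hsl : HSL_number xH m0)
  (G : lmodType R) (xG : G -> G) (xG_act : frob_action p xG)
  (pi : H -> G)
  (pi_add : forall a b, pi (a + b) = pi a + pi b)
  (pi_scale : forall (r : R) a, pi (r *: a) = r *: pi a)
  (pi_x : forall a, pi (xH a) = xG (pi a))
  (pi_surj : forall g, exists h, pi h = g)
  (pi_ker : forall h, pi h = 0 <-> Gamma_x xH h)
  (finG : finitely_many_special xG)
  (b : R -> Prop) (b_spec : special_ideal xG b) (b_ht : height_ge b 1)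
  (b_min : forall b', special_ideal xG b' -> height_ge b' 1 -> forall r, b r -> b' r)
  (h : H) :
  [<-> (forall n r, (m0 <= n)%N -> frob_bracket b (p ^ m0) r -> r *: iter n xH h = 0);
       (exists c, [/\ Rcirc c, b c & forall n, (m0 <= n)%N -> c *: iter n xH h = 0]);
       (exists c, [/\ Rcirc c, b c & exists N, forall n, (N <= n)%N -> c *: iter n xH h = 0]);
       (exists c, Rcirc c /\ exists N, forall n, (N <= n)%N -> c *: iter n xH h = 0)].
Proof.
have p_gt0 : (0 < p)%N := prime_gt0 (pcharf_prime charRp).
have G_tf := Gamma_quotient_torsion_free pi_x pi_surj pi_ker.
tfae.
- move=> bracket_kills; have [c Rc bc] := height_ge1_Rcirc noethR b_spec.1 b_ht.
  exists (c ^+ (p ^ m0)); split; first exact: Rcirc_expr.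
    by apply: ideal_expr b_spec.1 _ bc; rewrite expn_gt0 p_gt0.
  by move=> n m0n; apply: bracket_kills => //; apply: frob_bracket_expr.
- by case=> c [Rc bc c_kills]; exists c; split=> //; exists m0.
- by case=> c [Rc _ c_kills]; exists c.
- case=> c [Rc [N c_kills]] n r m0n; apply: frob_bracket_scale_eq0 => s bs.
  have c_kills_g : ann_cx xG c (pi h).
    apply: (ann_cx_eventually xG_act p_gt0 G_tf (N := N)) => k Nk.
    by rewrite -(pi_iter pi_x) -pi_scale c_kills // (additive_map0 pi_add).
  have : Gamma_x xH (s *: iter (n - m0) xH h).
    apply/pi_ker; rewrite pi_scale (pi_iter pi_x).
    exact: (special_min_ann_cx xG_act p_gt0 G_tf b_min Rc c_kills_g (n - m0)%N bs).
  by move/(hsl.1 _); rewrite (iter_frobZ xH_act) -iterD subnKC.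
Qed.
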